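(* Let $(X,I,T)$ be a relative monad in a 2-category $\mathcal{K}$ and $(S,S_0)$ a monad compatible with $I$. Then the assignments $d\mapsto\hat T$ with $\hat T(M,\mu)=(TM,T\mu\cdot dM)$, $\hat T(f)=Tf$, and $\hat T\mapsto\widehat{m_0}\cdot STs_0$ (where $\widehat{m_0}$ is the $S$-algebra structure of $\hat T(S_0,m_0)$) are mutually inverse bijections between relative distributive laws $d\colon ST\Rightarrow TS_0$ of $T$ over $(S,S_0)$ and liftings of $T$ to the algebras of $(S,S_0)$.
   Context: Conventions: 1-cells compose by juxtaposition; vertical composition of 2-cells is written $\cdot$; whiskering by juxtaposition. Relative monad: a relative monad $(X,I,T)$ in $\mathcal{K}$ consists of objects $X_0,X$, 1-cells $I,T\colon X_0\to X$, an operator $(-)^\dagger\colon[I,T]\to[T,T]$ (extension: for every span $A,B\colon O\to X_0$ a function sending 2-cells $IA\Rightarrow TB$ to 2-cells $TA\Rightarrow TB$, natural in $O$, $A$ and $B$) and a 2-cell $t\colon I\Rightarrow T$ such that $k^\dagger\cdot tA=k$, $(tA)^\dagger=1_{TA}$, $(l^\dagger\cdot k)^\dagger=l^\dagger\cdot k^\dagger$ for all $k\colon IA\Rightarrow TB$, $l\colon IB\Rightarrow TC$. Monad compatible with $I\colon X_0\to X$: a pair $(S,S_0)$ of monads $(X,S,m,s)$ and $(X_0,S_0,m_0,s_0)$ in $\mathcal{K}$ with $SI=IS_0$, $mI=Im_0$, $sI=Is_0$. Relative distributive law: a 2-cell $d\colon ST\Rightarrow TS_0$ such that (D1) $d\cdot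 mT=Tm_0\cdot dS_0\cdot Sd$; (D2) $d\cdot sT=Ts_0$; (D3) for all $A,B\colon O\to X_0$ and $f\colon IA\Rightarrow TB$, $dB\cdot S(f^\dagger)=(dB\cdot Sf)^\dagger\cdot dA$ (here $dB\cdot Sf\colon IS_0A=SIA\Rightarrow TS_0B$); (D4) $d\cdot St=tS_0$ as 2-cells $SI=IS_0\Rightarrow TS_0$. Indexed algebras: for a monad $(X,S,m,s)$ and object $K$, $S\text{-}\mathrm{Alg}(K)$ is the category whose objects are pairs $(M,\mu)$ with $M\colon K\to X$, $\mu\colon SM\Rightarrow M$, $\mu\cdot sM=1_M$, $\mu\cdot S\mu=\mu\cdot mM$, and whose morphisms $(M,\mu)\to(N,\nu)$ are 2-cells $f\colon M\Rightarrow N$ with $f\cdot\mu=\nu\cdot Sf$; this gives a 2-functor $S\text{-}\mathrm{Alg}(-)\colon\mathcal{K}^{op}\to\mathbf{Cat}$ by precomposition. Lifting to algebras: a lifting of $T$ to the algebras of $(S,S_0)$ is a 2-natural transformation $\hat T\colon S_0\text{-}\mathrm{Alg}(-)\to S\text{-}\mathrm{Alg}(-)$ of the form $\hat T(M,\mu)=(TM,\hat T\mu)$ on objects and $\hat T(f)=Tf$ on morphisms, carrying the relative monad structure over $I_*\colon(M,\mu)\mapsto(IM,I\mu)$ whose unit and extension are those of $T$, which means precisely: (a) for all $K$-indexed $S_0$-algebras $(M,\mu),(N,\nu)$ and every 2-cell $f\colon IM\Rightarrow TN$ with $f\cdot I\mu=\hat T\nu\cdot Sf$, one has $f^\dagger\cdot\hat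 T\mu=\hat T\nu\cdot Sf^\dagger$; (b) for every $(M,\mu)$, $tM\cdot I\mu=\hat T\mu\cdot StM$. *)

(* Presentation of a strict 2-category: for each pair of objects A B we have
   a type of 1-cells [Hom A B] and a type [Cell A B] of all 2-cells between
   1-cells A -> B, each 2-cell carrying its source and target 1-cell.
   The 2-cells alpha : f => g are exactly those with [src alpha = f] and
   [tgt alpha = g] (predicate [is_cell]).  Composition operations are total
   functions, but all laws are only required on well-typed composites.
   This avoids dependent transports along equalities of 1-cells such as
   SI = IS0. *)

Record TwoCat := {
  Obj : Type;
  Hom : Obj -> Obj -> Type;
  Cell : Obj -> Obj -> Type;
  id1 : forall A, Hom A A;
  comp1 : forall {A B C}, Hom B C -> Hom A B -> Hom A C;
  src : forall {A B}, Cell A B -> Hom A B;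
  tgt : forall {A B}, Cell A B -> Hom A B;
  id2 : forall {A B}, Hom A B -> Cell A B;
  (* vcomp b a = b . a : first a, then b *)
  vcomp : forall {A B}, Cell A B -> Cell A B -> Cell A B;
  lwh : forall {A B C}, Hom B C -> Cell A B -> Cell A C;
  rwh : forall {A B C}, Cell B C -> Hom A B -> Cell A C;

  comp1_assoc : forall A B C D (h : Hom C D) (g : Hom B C) (f : Hom A B),
      comp1 h (comp1 g f) = comp1 (comp1 h g) f;
  comp1_id_l : forall A B (f : Hom A B), comp1 (id1 B) f = f;
  comp1_id_r : forall A B (f : Hom A B), comp1 f (id1 A) = f;

  src_id2 : forall A B (f : Hom A B), src (id2 f) = f;
  tgt_id2 : forall A B (f : Hom A B), tgt (id2 f) = f;
  src_vcomp : forall A B (b a : Cell A B), tgt a = src b -> src (vcomp b a) = src a;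
  tgt_vcomp : forall A B (b a : Cell A B), tgt a = src b -> tgt (vcomp b a) = tgt b;
  src_lwh : forall A B C (g : Hom B C) (a : Cell A B), src (lwh g a) = comp1 g (src a);
  tgt_lwh : forall A B C (g : Hom B C) (a : Cell A B), tgt (lwh g a) = comp1 g (tgt a);
  src_rwh : forall A B C (a : Cell B C) (f : Hom A B), src (rwh a f) = comp1 (src a) f;
  tgt_rwh : forall A B C (a : Cell B C) (f : Hom A B), tgt (rwh a f) = comp1 (tgt a) f;

  vcomp_assoc : forall A B (c b a : Cell A B), tgt a = src b -> tgt b = src c ->
      vcomp c (vcomp b a) = vcomp (vcomp c b) a;
  vcomp_id_l : forall A B (a : Cell A B), vcomp (id2 (tgt a)) a = a;
  vcomp_id_r : forall A B (a : Cell A B), vcomp a (id2 (src a)) = a;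

  lwh_vcomp : forall A B C (g : Hom B C) (b a : Cell A B), tgt a = src b ->
      lwh g (vcomp b a) = vcomp (lwh g b) (lwh g a);
  lwh_id2 : forall A B C (g : Hom B C) (f : Hom A B), lwh g (id2 f) = id2 (comp1 g f);
  rwh_vcomp : forall A B C (b a : Cell B C) (f : Hom A B), tgt a = src b ->
      rwh (vcomp b a) f = vcomp (rwh b f) (rwh a f);
  rwh_id2 : forall A B C (g : Hom B C) (f : Hom A B), rwh (id2 g) f = id2 (comp1 g f);

  lwh_comp1 : forall A B C D (h : Hom C D) (g : Hom B C) (a : Cell A B),
      lwh (comp1 h g) a = lwh h (lwh g a);
  lwh_id1 : forall A B (a : Cell A B), lwh (id1 B) a = a;
  rwh_comp1 : forall A B C D (a : Cell C D) (g : Hom B C) (f : Hom A B),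
      rwh a (comp1 g f) = rwh (rwh a g) f;
  rwh_id1 : forall A B (a : Cell A B), rwh a (id1 A) = a;
  lwh_rwh : forall A B C D (h : Hom C D) (a : Cell B C) (f : Hom A B),
      rwh (lwh h a) f = lwh h (rwh a f);

  interchange : forall A B C (b : Cell B C) (a : Cell A B),
      vcomp (rwh b (tgt a)) (lwh (src b) a) = vcomp (lwh (tgt b) a) (rwh b (src a))
}.

Arguments id1 {t} A.
Arguments comp1 {t A B C} _ _.
Arguments src {t A B} _.
Arguments tgt {t A B} _.
Arguments id2 {t A B} _.
Arguments vcomp {t A B} _ _.
Arguments lwh {t A B C} _ _.
Arguments rwh {t A B C} _ _.

Section TwoCatNotions.
Context {K : TwoCat}.

Definition is_cell {A B : Obj K} (a : Cell K A B) (f g : Hom K A B) : Prop :=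
  src a = f /\ tgt a = g.

Definition is_monad {X : Obj K} (S : Hom K X X) (m s : Cell K X X) : Prop :=
  is_cell m (comp1 S S) S /\ is_cell s (id1 X) S /\
  vcomp m (lwh S m) = vcomp m (rwh m S) /\
  vcomp m (lwh S s) = id2 S /\
  vcomp m (rwh s S) = id2 S.

(* (X, I, T) relative monad with extension operator ext (ext O A B k = k^dagger
   for k : IA => TB with A B : O -> X0) and unit t *)
Definition is_rel_monad {X0 X : Obj K} (I T : Hom K X0 X)
    (ext : forall O : Obj K, Hom K O X0 -> Hom K O X0 -> Cell K O X -> Cell K O X)
    (t : Cell K X0 X) : Prop :=
  is_cell t I T /\
  (forall O (A B : Hom K O X0) (k : Cell K O X),
      is_cell k (comp1 I A) (comp1 T B) ->
      is_cell (ext O A B k) (comp1 T A) (comp1 T B)) /\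
  (forall O O' (h : Hom K O' O) (A B : Hom K O X0) (k : Cell K O X),
      is_cell k (comp1 I A) (comp1 T B) ->
      ext O' (comp1 A h) (comp1 B h) (rwh k h) = rwh (ext O A B k) h) /\
  (forall O (A A' B : Hom K O X0) (a : Cell K O X0) (k : Cell K O X),
      is_cell a A' A -> is_cell k (comp1 I A) (comp1 T B) ->
      ext O A' B (vcomp k (lwh I a)) = vcomp (ext O A B k) (lwh T a)) /\
  (forall O (A B B' : Hom K O X0) (b : Cell K O X0) (k : Cell K O X),
      is_cell b B B' -> is_cell k (comp1 I A) (comp1 T B) ->
      ext O A B' (vcomp (lwh T b) k) = vcomp (lwh T b) (ext O A B k)) /\
  (forall O (A B : Hom K O X0) (k : Cell K O X),
      is_cell k (comp1 I A) (comp1 T B) ->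
      vcomp (ext O A B k) (rwh t A) = k) /\
  (forall O (A : Hom K O X0), ext O A A (rwh t A) = id2 (comp1 T A)) /\
  (forall O (A B C : Hom K O X0) (k l : Cell K O X),
      is_cell k (comp1 I A) (comp1 T B) -> is_cell l (comp1 I B) (comp1 T C) ->
      ext O A C (vcomp (ext O B C l) k) = vcomp (ext O B C l) (ext O A B k)).

Definition compatible_monad {X0 X : Obj K} (I : Hom K X0 X)
    (S : Hom K X X) (m s : Cell K X X)
    (S0 : Hom K X0 X0) (m0 s0 : Cell K X0 X0) : Prop :=
  is_monad S m s /\ is_monad S0 m0 s0 /\
  comp1 S I = comp1 I S0 /\ rwh m I = lwh I m0 /\ rwh s I = lwh I s0.

Definition is_rel_dist_law {X0 X : Obj K} (I T : Hom K X0 X)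
    (ext : forall O : Obj K, Hom K O X0 -> Hom K O X0 -> Cell K O X -> Cell K O X)
    (t : Cell K X0 X)
    (S : Hom K X X) (m s : Cell K X X)
    (S0 : Hom K X0 X0) (m0 s0 : Cell K X0 X0) (d : Cell K X0 X) : Prop :=
  is_cell d (comp1 S T) (comp1 T S0) /\
  (* D1 *)
  vcomp d (rwh m T) = vcomp (lwh T m0) (vcomp (rwh d S0) (lwh S d)) /\
  (* D2 *)
  vcomp d (rwh s T) = lwh T s0 /\
  (* D3 *)
  (forall O (A B : Hom K O X0) (f : Cell K O X),
      is_cell f (comp1 I A) (comp1 T B) ->
      vcomp (rwh d B) (lwh S (ext O A B f))
      = vcomp (ext O (comp1 S0 A) (comp1 S0 B) (vcomp (rwh d B) (lwh S f))) (rwh d A)) /\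
  (* D4 *)
  vcomp d (lwh S t) = rwh t S0.

Definition is_alg {X : Obj K} (S : Hom K X X) (m s : Cell K X X)
    {O : Obj K} (M : Hom K O X) (mu : Cell K O X) : Prop :=
  is_cell mu (comp1 S M) M /\
  vcomp mu (rwh s M) = id2 M /\
  vcomp mu (lwh S mu) = vcomp mu (rwh m M).

Definition is_alg_hom {X : Obj K} (S : Hom K X X)
    {O : Obj K} (M N : Hom K O X) (mu nu f : Cell K O X) : Prop :=
  is_cell f M N /\ vcomp f mu = vcomp nu (lwh S f).

(* A lifting of T to the algebras of (S, S0): the family
   That_O : S0-Alg(O) -> S-Alg(O), (M, mu) |-> (TM, L O M mu), f |-> Tf,
   required to be a well-defined functor (Tf is a morphism of S-algebras),
   2-natural in O, and to carry the relative monad structure (a), (b).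
   Values of L outside S0-algebras are irrelevant. *)
Definition is_lifting {X0 X : Obj K} (I T : Hom K X0 X)
    (ext : forall O : Obj K, Hom K O X0 -> Hom K O X0 -> Cell K O X -> Cell K O X)
    (t : Cell K X0 X)
    (S : Hom K X X) (m s : Cell K X X)
    (S0 : Hom K X0 X0) (m0 s0 : Cell K X0 X0)
    (L : forall O : Obj K, Hom K O X0 -> Cell K O X0 -> Cell K O X) : Prop :=
  (forall O (M : Hom K O X0) (mu : Cell K O X0),
      is_alg S0 m0 s0 M mu -> is_alg S m s (comp1 T M) (L O M mu)) /\
  (forall O (M N : Hom K O X0) (mu nu f : Cell K O X0),
      is_alg S0 m0 s0 M mu -> is_alg S0 m0 s0 N nu -> is_alg_hom S0 M N mu nu f ->
      is_alg_hom S (comp1 T M) (comp1 T N) (L O M mu) (L O N nu) (lwh T f)) /\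
  (forall O O' (h : Hom K O' O) (M : Hom K O X0) (mu : Cell K O X0),
      is_alg S0 m0 s0 M mu -> L O' (comp1 M h) (rwh mu h) = rwh (L O M mu) h) /\
  (* (a) *)
  (forall O (M N : Hom K O X0) (mu nu : Cell K O X0) (f : Cell K O X),
      is_alg S0 m0 s0 M mu -> is_alg S0 m0 s0 N nu ->
      is_cell f (comp1 I M) (comp1 T N) ->
      vcomp f (lwh I mu) = vcomp (L O N nu) (lwh S f) ->
      vcomp (ext O M N f) (L O M mu) = vcomp (L O N nu) (lwh S (ext O M N f))) /\
  (* (b) *)
  (forall O (M : Hom K O X0) (mu : Cell K O X0),
      is_alg S0 m0 s0 M mu ->
      vcomp (rwh t M) (lwh I mu) = vcomp (L O M mu) (lwh S (rwh t M))).

Definition lifting_of_law {X0 X : Obj K} (T : Hom K X0 X) (d : Cell K X0 X)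
    : forall O : Obj K, Hom K O X0 -> Cell K O X0 -> Cell K O X :=
  fun O M mu => vcomp (lwh T mu) (rwh d M).

Definition law_of_lifting {X0 X : Obj K} (T : Hom K X0 X) (S : Hom K X X)
    (S0 : Hom K X0 X0) (m0 s0 : Cell K X0 X0)
    (L : forall O : Obj K, Hom K O X0 -> Cell K O X0 -> Cell K O X) : Cell K X0 X :=
  vcomp (L X0 S0 m0) (lwh (comp1 S T) s0).

End TwoCatNotions.


(* Then, for fixed (X, I, T) and (S, S0):
   - from a law d, the assignment (M, mu) |-> (TM, T mu . dM) sends
     S0-algebras to S-algebras (by D1, D2), morphisms to morphisms, is
     2-natural, and satisfies (a) (by D3 and naturality of the extension)
     and (b) (by D4); moreover m0hat . STs0 gives d back (unit law of S0);
   - from a lifting That, the 2-cell d := m0hat . STs0 reproduces That on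
     every algebra (M, mu), because mu : (S0M, m0M) -> (M, mu) is an algebra
     morphism out of a free algebra; the axioms D1-D4 follow from the algebra
     laws of m0hat, from (b), and from (a) applied to free algebras. *)

Section TypedCellCalculus.
Context {K : TwoCat}.

(* Identity laws, stated for a cell whose boundary is known only up to an
   equation of 1-cells. *)
Lemma vcomp_id2_l_at {A B : Obj K} (f : Hom K A B) (a : Cell K A B) :
  tgt a = f -> vcomp (id2 f) a = a.
Proof. intros <-; apply vcomp_id_l. Qed.

Lemma vcomp_id2_r_at {A B : Obj K} (f : Hom K A B) (a : Cell K A B) :
  src a = f -> vcomp a (id2 f) = a.
Proof. intros <-; apply vcomp_id_r. Qed.

Lemma vcomp_rewrite2 {A B : Obj K} (a b r Q : Cell K A B) :
  vcomp b a = Q -> tgt r = src a -> tgt a = src b ->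
  vcomp b (vcomp a r) = vcomp Q r.
Proof. intros <- ? ?; apply vcomp_assoc; auto. Qed.

Lemma vcomp_rewrite3 {A B : Obj K} (a b c r Q : Cell K A B) :
  vcomp c (vcomp b a) = Q -> tgt r = src a -> tgt a = src b -> tgt b = src c ->
  vcomp c (vcomp b (vcomp a r)) = vcomp Q r.
Proof.
  intros <- ? ? ?.
  rewrite (vcomp_assoc _ _ _ b a r) by auto.
  apply vcomp_assoc; rewrite ?src_vcomp, ?tgt_vcomp; auto.
Qed.

Lemma vcomp_rewrite4 {A B : Obj K} (a b c e r Q : Cell K A B) :
  vcomp e (vcomp c (vcomp b a)) = Q ->
  tgt r = src a -> tgt a = src b -> tgt b = src c -> tgt c = src e ->
  vcomp e (vcomp c (vcomp b (vcomp a r))) = vcomp Q r.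
Proof.
  intros <- ? ? ? ?.
  rewrite (vcomp_rewrite3 a b c r (vcomp c (vcomp b a))) by auto.
  apply vcomp_assoc; repeat (rewrite ?src_vcomp, ?tgt_vcomp; auto).
Qed.

Lemma interchange_at {A B C : Obj K} (b : Cell K B C) (a : Cell K A B) f f' g g' :
  is_cell a f f' -> is_cell b g g' ->
  vcomp (rwh b f') (lwh g a) = vcomp (lwh g' a) (rwh b f).
Proof. intros [<- <-] [<- <-]; apply interchange. Qed.

End TypedCellCalculus.

Section RelativeDistributiveLaws.
Context {K : TwoCat} {X0 X : Obj K} (I T : Hom K X0 X)
    (ext : forall O : Obj K, Hom K O X0 -> Hom K O X0 -> Cell K O X -> Cell K O X)
    (t : Cell K X0 X)
    (S : Hom K X X) (m s : Cell K X X)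
    (S0 : Hom K X0 X0) (m0 s0 : Cell K X0 X0).
Hypothesis rel_monad : is_rel_monad I T ext t.
Hypothesis compatible : compatible_monad I S m s S0 m0 s0.

Lemma t_src : src t = I. Proof. apply rel_monad. Qed.
Lemma t_tgt : tgt t = T. Proof. apply rel_monad. Qed.
Lemma m_src : src m = comp1 S S. Proof. apply compatible. Qed.
Lemma m_tgt : tgt m = S. Proof. apply compatible. Qed.
Lemma s_src : src s = id1 X. Proof. apply compatible. Qed.
Lemma s_tgt : tgt s = S. Proof. apply compatible. Qed.
Lemma m0_src : src m0 = comp1 S0 S0. Proof. apply compatible. Qed.
Lemma m0_tgt : tgt m0 = S0. Proof. apply compatible. Qed.
Lemma s0_src : src s0 = id1 X0. Proof. apply compatible. Qed.
Lemma s0_tgt : tgt s0 = S0. Proof. apply compatible. Qed.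

Lemma SI_eq : comp1 S I = comp1 I S0. Proof. apply compatible. Qed.
Lemma SI_eq_at {O : Obj K} (x : Hom K O X0) :
  comp1 S (comp1 I x) = comp1 I (comp1 S0 x).
Proof. rewrite !comp1_assoc, SI_eq; reflexivity. Qed.
Lemma SI_whisker {O : Obj K} (x : Cell K O X0) : lwh S (lwh I x) = lwh I (lwh S0 x).
Proof. rewrite <- !lwh_comp1, SI_eq; reflexivity. Qed.
Lemma mI_eq : rwh m I = lwh I m0. Proof. apply compatible. Qed.
Lemma sI_eq : rwh s I = lwh I s0. Proof. apply compatible. Qed.

(* Monad laws of S0. *)
Lemma m0_assoc : vcomp m0 (lwh S0 m0) = vcomp m0 (rwh m0 S0). Proof. apply compatible. Qed.
Lemma m0_unit_l : vcomp m0 (lwh S0 s0) = id2 S0. Proof. apply compatible. Qed.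
Lemma m0_unit_r : vcomp m0 (rwh s0 S0) = id2 S0. Proof. apply compatible. Qed.

(* Typing and naturality of the extension operator: the only parts of the
   relative monad structure that the correspondence uses. *)
Lemma ext_src {O : Obj K} (A B : Hom K O X0) (k : Cell K O X) :
  src k = comp1 I A -> tgt k = comp1 T B -> src (ext O A B k) = comp1 T A.
Proof. intros; apply rel_monad; split; auto. Qed.
Lemma ext_tgt {O : Obj K} (A B : Hom K O X0) (k : Cell K O X) :
  src k = comp1 I A -> tgt k = comp1 T B -> tgt (ext O A B k) = comp1 T B.
Proof. intros; apply rel_monad; split; auto. Qed.
Lemma ext_natA {O : Obj K} (A A' B : Hom K O X0) (a : Cell K O X0) (k : Cell K O X) :
  is_cell a A' A -> is_cell k (comp1 I A) (comp1 T B) ->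
  ext O A' B (vcomp k (lwh I a)) = vcomp (ext O A B k) (lwh T a).
Proof. apply rel_monad. Qed.
Lemma ext_natB {O : Obj K} (A B B' : Hom K O X0) (b : Cell K O X0) (k : Cell K O X) :
  is_cell b B B' -> is_cell k (comp1 I A) (comp1 T B) ->
  ext O A B' (vcomp (lwh T b) k) = vcomp (lwh T b) (ext O A B k).
Proof. apply rel_monad. Qed.

(* Automation.  [cell_type] proves boundary equations [src a = f] /
   [tgt a = g] by computing boundaries structurally and normalising 1-cells
   (associativity, units, SI = IS0); [cell_type_hook] lets later sections
   teach it the boundaries of further cells.  [cell_norm] brings a 2-cell to
   normal form: whiskerings pushed to generators, vertical composites
   right-associated, identities removed.  [crewrite e] normalises the
   equation e and rewrites with it anywhere in a normalised goal (also inside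
   a longer composite); the variants whisker e first, and [cinterchange b a]
   rewrites with the interchange law of b and a. *)
#[local] Hint Rewrite @t_src @t_tgt @m_src @m_tgt @s_src @s_tgt @m0_src @m0_tgt
  @s0_src @s0_tgt @src_lwh @tgt_lwh @src_rwh @tgt_rwh @src_id2 @tgt_id2 : cell_bdry.

Ltac hom_norm :=
  repeat (rewrite <- ?comp1_assoc, ?comp1_id_l, ?comp1_id_r, ?SI_eq_at, ?SI_eq).

Ltac cell_type_hook := fail.
Ltac cell_type_step :=
  match goal with
  | |- context [src (ext ?O ?A ?B ?k)] => rewrite (ext_src A B k) by cell_type
  | |- context [tgt (ext ?O ?A ?B ?k)] => rewrite (ext_tgt A B k) by cell_type
  | |- _ => cell_type_hook
  | |- context [src (vcomp ?b ?a)] => rewrite (src_vcomp _ _ _ b a) by cell_type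
  | |- context [tgt (vcomp ?b ?a)] => rewrite (tgt_vcomp _ _ _ b a) by cell_type
  | H : src ?x = _ |- context [src ?x] => rewrite H
  | H : tgt ?x = _ |- context [tgt ?x] => rewrite H
  | |- _ => progress (autorewrite with cell_bdry; try assumption)
  end
with cell_type := repeat cell_type_step; hom_norm; reflexivity.

Ltac cell_norm_step :=
  first
  [ progress (rewrite ?lwh_comp1, ?rwh_comp1, ?lwh_rwh, ?lwh_id1, ?rwh_id1,
              ?lwh_id2, ?rwh_id2, ?sI_eq, ?mI_eq, ?SI_whisker)
  | rewrite lwh_vcomp by cell_type
  | rewrite rwh_vcomp by cell_type
  | rewrite <- vcomp_assoc by cell_type
  | rewrite vcomp_id2_l_at by cell_type
  | rewrite vcomp_id2_r_at by cell_type
  | progress hom_norm ].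
Ltac cell_norm := repeat cell_norm_step.

Ltac rewrite_normalised H :=
  revert H; repeat cell_type_step; cell_norm; intro H;
  first [ rewrite H
        | rewrite (vcomp_rewrite2 _ _ _ _ H) by cell_type
        | rewrite (vcomp_rewrite3 _ _ _ _ _ H) by cell_type
        | rewrite (vcomp_rewrite4 _ _ _ _ _ _ H) by cell_type ];
  clear H; cell_norm.

Tactic Notation "crewrite" constr(e) :=
  let H := fresh "H" in pose proof e as H; rewrite_normalised H.
Tactic Notation "crewrite" "<-" constr(e) :=
  let H := fresh "H" in pose proof (eq_sym e) as H; rewrite_normalised H.
Tactic Notation "crewrite_l" constr(g) constr(e) :=
  let H := fresh "H" in pose proof (f_equal (lwh g) e) as H; rewrite_normalised H.
Tactic Notation "crewrite_l" "<-" constr(g) constr(e) :=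
  let H := fresh "H" in pose proof (eq_sym (f_equal (lwh g) e)) as H;
  rewrite_normalised H.
Tactic Notation "crewrite_r" constr(e) constr(f) :=
  let H := fresh "H" in pose proof (f_equal (fun x => rwh x f) e) as H;
  cbv beta in H; rewrite_normalised H.
Tactic Notation "crewrite_r" "<-" constr(e) constr(f) :=
  let H := fresh "H" in pose proof (eq_sym (f_equal (fun x => rwh x f) e)) as H;
  cbv beta in H; rewrite_normalised H.
Tactic Notation "cinterchange" constr(b) constr(a) :=
  crewrite (interchange_at b a (src a) (tgt a) (src b) (tgt b)
              (conj eq_refl eq_refl) (conj eq_refl eq_refl)).
Tactic Notation "cinterchange" "<-" constr(b) constr(a) :=
  crewrite <- (interchange_at b a (src a) (tgt a) (src b) (tgt b)
                 (conj eq_refl eq_refl) (conj eq_refl eq_refl)).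

Lemma free_alg {O : Obj K} (A : Hom K O X0) : is_alg S0 m0 s0 (comp1 S0 A) (rwh m0 A).
Proof.
  split; [split; cell_type | split].
  - crewrite_r m0_unit_r A. reflexivity.
  - cell_norm. crewrite_r m0_assoc A. reflexivity.
Qed.

Lemma regular_alg : is_alg S0 m0 s0 S0 m0.
Proof.
  pose proof (free_alg (id1 X0)) as H.
  rewrite comp1_id_r, rwh_id1 in H. exact H.
Qed.

Section LiftingOfLaw.
Variable d : Cell K X0 X.
Hypothesis d_src : src d = comp1 S T.
Hypothesis d_tgt : tgt d = comp1 T S0.
Hypothesis law_mult : vcomp d (rwh m T) = vcomp (lwh T m0) (vcomp (rwh d S0) (lwh S d)).
Hypothesis law_unit : vcomp d (rwh s T) = lwh T s0.
Hypothesis law_ext : forall O (A B : Hom K O X0) (f : Cell K O X),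
  is_cell f (comp1 I A) (comp1 T B) ->
  vcomp (rwh d B) (lwh S (ext O A B f))
  = vcomp (ext O (comp1 S0 A) (comp1 S0 B) (vcomp (rwh d B) (lwh S f))) (rwh d A).
Hypothesis law_rel_unit : vcomp d (lwh S t) = rwh t S0.

(* The law is recovered from its lifting, by the left unit law of S0. *)
Lemma law_of_lifting_of_law : law_of_lifting T S S0 m0 s0 (lifting_of_law T d) = d.
Proof.
  unfold law_of_lifting, lifting_of_law.
  cell_norm. cinterchange d s0. crewrite_l T m0_unit_l. reflexivity.
Qed.

(* (TM, T mu . dM) is an S-algebra: unit by D2, associativity by D1. *)
Lemma lifting_of_law_alg {O : Obj K} (M : Hom K O X0) (mu : Cell K O X0) :
  is_alg S0 m0 s0 M mu -> is_alg S m s (comp1 T M) (lifting_of_law T d O M mu).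
Proof.
  unfold lifting_of_law. intros [[Hs Ht] [Hunit Hassoc]].
  split; [split; cell_type | split].
  - cell_norm. crewrite_r law_unit M. crewrite_l T Hunit. reflexivity.
  - cell_norm. cinterchange d mu. crewrite_l T Hassoc. crewrite_r <- law_mult M.
    reflexivity.
Qed.

(* Tf is a morphism of S-algebras, by naturality of d. *)
Lemma lifting_of_law_hom {O : Obj K} (M N : Hom K O X0) (mu nu f : Cell K O X0) :
  is_alg S0 m0 s0 M mu -> is_alg S0 m0 s0 N nu -> is_alg_hom S0 M N mu nu f ->
  is_alg_hom S (comp1 T M) (comp1 T N)
    (lifting_of_law T d O M mu) (lifting_of_law T d O N nu) (lwh T f).
Proof.
  unfold lifting_of_law. intros [[Hs Ht] _] [[Hs' Ht'] _] [[Fs Ft] Hf].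
  split; [split; cell_type |].
  cell_norm. crewrite_l T Hf. cinterchange <- d f. reflexivity.
Qed.

Lemma lifting_of_law_natural {O O' : Obj K} (h : Hom K O' O)
    (M : Hom K O X0) (mu : Cell K O X0) :
  is_alg S0 m0 s0 M mu ->
  lifting_of_law T d O' (comp1 M h) (rwh mu h) = rwh (lifting_of_law T d O M mu) h.
Proof. unfold lifting_of_law. intros [[Hs Ht] _]. cell_norm. reflexivity. Qed.

(* Condition (a): by D3, then naturality of the extension in B (for nu) and
   in A (for mu), using the hypothesis on f in between. *)
Lemma lifting_of_law_ext {O : Obj K} (M N : Hom K O X0) (mu nu : Cell K O X0)
    (f : Cell K O X) :
  is_alg S0 m0 s0 M mu -> is_alg S0 m0 s0 N nu ->
  is_cell f (comp1 I M) (comp1 T N) ->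
  vcomp f (lwh I mu) = vcomp (lifting_of_law T d O N nu) (lwh S f) ->
  vcomp (ext O M N f) (lifting_of_law T d O M mu)
  = vcomp (lifting_of_law T d O N nu) (lwh S (ext O M N f)).
Proof.
  unfold lifting_of_law. intros [[Hs Ht] _] [[Hs' Ht'] _] [Fs Ft] Hf.
  assert (Hdf : is_cell (vcomp (rwh d N) (lwh S f))
                  (comp1 I (comp1 S0 M)) (comp1 T (comp1 S0 N)))
    by (split; cell_type).
  cell_norm. crewrite (law_ext O M N f (conj Fs Ft)).
  crewrite <- (ext_natB _ _ N nu _ (conj Hs' Ht') Hdf).
  crewrite <- Hf.
  crewrite (ext_natA M _ N mu f (conj Hs Ht) (conj Fs Ft)).
  reflexivity.
Qed.

(* Condition (b): by D4 and interchange. *)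
Lemma lifting_of_law_unit {O : Obj K} (M : Hom K O X0) (mu : Cell K O X0) :
  is_alg S0 m0 s0 M mu ->
  vcomp (rwh t M) (lwh I mu) = vcomp (lifting_of_law T d O M mu) (lwh S (rwh t M)).
Proof.
  unfold lifting_of_law. intros [[Hs Ht] _].
  cell_norm. crewrite_r law_rel_unit M. cinterchange t mu. reflexivity.
Qed.

End LiftingOfLaw.

Lemma lifting_of_law_is_lifting (d : Cell K X0 X) :
  is_rel_dist_law I T ext t S m s S0 m0 s0 d ->
  is_lifting I T ext t S m s S0 m0 s0 (lifting_of_law T d).
Proof.
  intros [[ds dt] [D1 [D2 [D3 D4]]]].
  refine (conj _ (conj _ (conj _ (conj _ _)))); intros.
  - eapply lifting_of_law_alg; eauto.
  - eapply lifting_of_law_hom; eauto.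
  - eapply lifting_of_law_natural; eauto.
  - eapply lifting_of_law_ext; eauto.
  - eapply lifting_of_law_unit; eauto.
Qed.

Section LawOfLifting.
Variable L : forall O : Obj K, Hom K O X0 -> Cell K O X0 -> Cell K O X.
Hypothesis lift_alg : forall O (M : Hom K O X0) (mu : Cell K O X0),
  is_alg S0 m0 s0 M mu -> is_alg S m s (comp1 T M) (L O M mu).
Hypothesis lift_hom : forall O (M N : Hom K O X0) (mu nu f : Cell K O X0),
  is_alg S0 m0 s0 M mu -> is_alg S0 m0 s0 N nu -> is_alg_hom S0 M N mu nu f ->
  is_alg_hom S (comp1 T M) (comp1 T N) (L O M mu) (L O N nu) (lwh T f).
Hypothesis lift_natural : forall O O' (h : Hom K O' O) (M : Hom K O X0) (mu : Cell K O X0),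
  is_alg S0 m0 s0 M mu -> L O' (comp1 M h) (rwh mu h) = rwh (L O M mu) h.
Hypothesis lift_ext : forall O (M N : Hom K O X0) (mu nu : Cell K O X0) (f : Cell K O X),
  is_alg S0 m0 s0 M mu -> is_alg S0 m0 s0 N nu ->
  is_cell f (comp1 I M) (comp1 T N) ->
  vcomp f (lwh I mu) = vcomp (L O N nu) (lwh S f) ->
  vcomp (ext O M N f) (L O M mu) = vcomp (L O N nu) (lwh S (ext O M N f)).
Hypothesis lift_unit : forall O (M : Hom K O X0) (mu : Cell K O X0),
  is_alg S0 m0 s0 M mu ->
  vcomp (rwh t M) (lwh I mu) = vcomp (L O M mu) (lwh S (rwh t M)).

Lemma lift_src {O : Obj K} M mu :
  is_alg S0 m0 s0 M mu -> src (L O M mu) = comp1 S (comp1 T M).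
Proof. intros H; destruct (lift_alg O M mu H) as [[-> _] _]; hom_norm; reflexivity. Qed.
Lemma lift_tgt {O : Obj K} M mu : is_alg S0 m0 s0 M mu -> tgt (L O M mu) = comp1 T M.
Proof. intros H; destruct (lift_alg O M mu H) as [[_ ->] _]; reflexivity. Qed.
Lemma lift_alg_unit {O : Obj K} M mu :
  is_alg S0 m0 s0 M mu -> vcomp (L O M mu) (rwh s (comp1 T M)) = id2 (comp1 T M).
Proof. intros H; apply (lift_alg O M mu H). Qed.
Lemma lift_alg_assoc {O : Obj K} M mu :
  is_alg S0 m0 s0 M mu ->
  vcomp (L O M mu) (lwh S (L O M mu)) = vcomp (L O M mu) (rwh m (comp1 T M)).
Proof. intros H; apply (lift_alg O M mu H). Qed.

Ltac alg_hyp := first [assumption | apply free_alg | apply regular_alg].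
Ltac cell_type_hook ::=
  match goal with
  | |- context [src (L ?O ?M ?mu)] => rewrite (lift_src M mu) by alg_hyp
  | |- context [tgt (L ?O ?M ?mu)] => rewrite (lift_tgt M mu) by alg_hyp
  end.

Variable d : Cell K X0 X.
Hypothesis d_def : d = vcomp (L X0 S0 m0) (lwh (comp1 S T) s0).

Lemma law_of_lifting_src : src d = comp1 S T. Proof. rewrite d_def; cell_type. Qed.
Lemma law_of_lifting_tgt : tgt d = comp1 T S0. Proof. rewrite d_def; cell_type. Qed.

(* The lifting is determined by d: mu : (S0 M, m0 M) -> (M, mu) is a morphism
   of S0-algebras, so T mu is a morphism out of That(S0 M, m0 M) = m0hat M. *)
Lemma lifting_of_law_of_lifting {O : Obj K} (M : Hom K O X0) (mu : Cell K O X0) :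
  is_alg S0 m0 s0 M mu -> vcomp (lwh T mu) (rwh d M) = L O M mu.
Proof.
  intros Halg. pose proof Halg as [[Hs Ht] [Hunit Hassoc]].
  assert (Hmu_hom : is_alg_hom S0 (comp1 S0 M) M (rwh m0 M) mu mu)
    by (split; [split; cell_type | symmetry; exact Hassoc]).
  destruct (lift_hom O _ _ _ _ _ (free_alg M) Halg Hmu_hom) as [_ Tmu_hom].
  rewrite d_def. cell_norm.
  rewrite <- (lift_natural X0 O M S0 m0 regular_alg).
  crewrite Tmu_hom. crewrite_l (comp1 S T) Hunit. reflexivity.
Qed.

(* D1: from the associativity of the S-algebra m0hat. *)
Lemma law_of_lifting_mult :
  vcomp d (rwh m T) = vcomp (lwh T m0) (vcomp (rwh d S0) (lwh S d)).
Proof.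
  pose proof law_of_lifting_src. pose proof law_of_lifting_tgt.
  crewrite (lifting_of_law_of_lifting S0 m0 regular_alg).
  rewrite d_def. cell_norm.
  crewrite (lift_alg_assoc S0 m0 regular_alg).
  cinterchange <- m (lwh T s0).
  reflexivity.
Qed.

(* D2: from the unit law of the S-algebra m0hat. *)
Lemma law_of_lifting_unit : vcomp d (rwh s T) = lwh T s0.
Proof.
  rewrite d_def. cell_norm. cinterchange <- s (lwh T s0).
  crewrite (lift_alg_unit S0 m0 regular_alg). reflexivity.
Qed.

(* D4: from condition (b) on the regular algebra. *)
Lemma law_of_lifting_rel_unit : vcomp d (lwh S t) = rwh t S0.
Proof.
  rewrite d_def. cell_norm.
  crewrite_l <- S (interchange_at t s0 (src s0) (tgt s0) (src t) (tgt t)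
                     (conj eq_refl eq_refl) (conj eq_refl eq_refl)).
  crewrite <- (lift_unit X0 S0 m0 regular_alg).
  crewrite_l I m0_unit_l. reflexivity.
Qed.

(* D3: apply (a) to the free algebras on A and B and the 2-cell
   g = m0hat B . S T s0 B . S f : I S0 A => T S0 B, whose restriction along
   s0 A is T s0 B . f; conclude by naturality of the extension. *)
Lemma law_of_lifting_ext {O : Obj K} (A B : Hom K O X0) (f : Cell K O X) :
  is_cell f (comp1 I A) (comp1 T B) ->
  vcomp (rwh d B) (lwh S (ext O A B f))
  = vcomp (ext O (comp1 S0 A) (comp1 S0 B) (vcomp (rwh d B) (lwh S f))) (rwh d A).
Proof.
  intros [Fs Ft].
  set (g := vcomp (L O (comp1 S0 B) (rwh m0 B))
              (vcomp (lwh S (lwh T (rwh s0 B))) (lwh S f))).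
  assert (Hg : is_cell g (comp1 I (comp1 S0 A)) (comp1 T (comp1 S0 B)))
    by (split; unfold g; cell_type).
  assert (Hg_alg : vcomp g (lwh I (rwh m0 A)) = vcomp (L O (comp1 S0 B) (rwh m0 B)) (lwh S g)).
  { unfold g. cell_norm. cinterchange <- m f. cinterchange <- m (lwh T (rwh s0 B)).
    crewrite <- (lift_alg_assoc _ _ (free_alg B)). reflexivity. }
  assert (Hg_unit : vcomp g (lwh I (rwh s0 A)) = vcomp (lwh T (rwh s0 B)) f).
  { unfold g. cell_norm. cinterchange <- s f. cinterchange <- s (lwh T (rwh s0 B)).
    crewrite (lift_alg_unit _ _ (free_alg B)). reflexivity. }
  assert (Hs0A : is_cell (rwh s0 A) A (comp1 S0 A)) by (split; cell_type).
  assert (Hs0B : is_cell (rwh s0 B) B (comp1 S0 B)) by (split; cell_type).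
  pose proof (lift_ext O _ _ _ _ g (free_alg A) (free_alg B) Hg Hg_alg) as Hext.
  pose proof (ext_natA _ _ _ _ g Hs0A Hg) as Hnat_A.
  pose proof (ext_natB _ _ _ _ f Hs0B (conj Fs Ft)) as Hnat_B.
  rewrite d_def. cell_norm.
  rewrite <- !(lift_natural X0 O _ S0 m0 regular_alg).
  change (vcomp (L O (comp1 S0 B) (rwh m0 B))
            (vcomp (lwh S (lwh T (rwh s0 B))) (lwh S f))) with g.
  destruct Hg as [Hg_src Hg_tgt].
  crewrite Hext. crewrite_l <- S Hnat_A. rewrite Hg_unit. crewrite Hnat_B.
  reflexivity.
Qed.

End LawOfLifting.

Lemma law_of_lifting_is_law (L : forall O : Obj K, Hom K O X0 -> Cell K O X0 -> Cell K O X) :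
  is_lifting I T ext t S m s S0 m0 s0 L ->
  is_rel_dist_law I T ext t S m s S0 m0 s0 (law_of_lifting T S S0 m0 s0 L).
Proof.
  intros [LA [LH [LN [La Lb]]]].
  refine (conj (conj _ _) (conj _ (conj _ (conj _ _)))); intros.
  - eapply law_of_lifting_src; eauto.
  - eapply law_of_lifting_tgt; eauto.
  - eapply law_of_lifting_mult; eauto.
  - eapply law_of_lifting_unit; eauto.
  - eapply law_of_lifting_ext; eauto.
  - eapply law_of_lifting_rel_unit; eauto.
Qed.

End RelativeDistributiveLaws.

Theorem mainTheorem12 (K : TwoCat) (X0 X : Obj K) (I T : Hom K X0 X)
    (ext : forall O : Obj K, Hom K O X0 -> Hom K O X0 -> Cell K O X -> Cell K O X)
    (t : Cell K X0 X)
    (S : Hom K X X) (m s : Cell K X X)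
    (S0 : Hom K X0 X0) (m0 s0 : Cell K X0 X0) :
  is_rel_monad I T ext t ->
  compatible_monad I S m s S0 m0 s0 ->
  (forall d : Cell K X0 X,
      is_rel_dist_law I T ext t S m s S0 m0 s0 d ->
      is_lifting I T ext t S m s S0 m0 s0 (lifting_of_law T d) /\
      law_of_lifting T S S0 m0 s0 (lifting_of_law T d) = d) /\
  (forall L : forall O : Obj K, Hom K O X0 -> Cell K O X0 -> Cell K O X,
      is_lifting I T ext t S m s S0 m0 s0 L ->
      is_rel_dist_law I T ext t S m s S0 m0 s0 (law_of_lifting T S S0 m0 s0 L) /\
      (forall O (M : Hom K O X0) (mu : Cell K O X0),
          is_alg S0 m0 s0 M mu ->
          lifting_of_law T (law_of_lifting T S S0 m0 s0 L) O M mu = L O M mu)).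
Proof.
  intros rel_monad compatible. split.
  - intros d law. split.
    + exact (lifting_of_law_is_lifting I T ext t S m s S0 m0 s0 rel_monad compatible d law).
    + destruct law as [[ds dt] _].
      eapply law_of_lifting_of_law; eauto.
  - intros L lifting. split.
    + exact (law_of_lifting_is_law I T ext t S m s S0 m0 s0 rel_monad compatible L lifting).
    + destruct lifting as [lift_alg [lift_hom [lift_natural _]]].
      intros O M mu Halg.
      eapply lifting_of_law_of_lifting; eauto.
Qed.
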